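(* Let $G$ be an abelian group and $S\subset G$ a subset, and let $\Gamma(G,S)$ be the Cayley sum graph. \begin{enumerate} \item If $S$ is a Sidon set in $G$, then the $4$-cycle $C_4$ is not a subgraph of $\Gamma(G,S)$. \item If $S$ is a partial symmetric Sidon set in $G$, then the complete bipartite graph $K_{2,3}$ is not a subgraph of $\Gamma(G,S)$. \end{enumerate}
   Context: The Cayley sum graph $\Gamma(G,S)$ has vertex set $G$, with $x$ and $y$ joined by an edge (a loop if $x=y$) if and only if $x+y\in S$. A subset $S\subset G$ is a Sidon set if every solution $(\alpha,\beta,\gamma,\delta)\in S^4$ of $\alpha+\beta=\gamma+\delta$ satisfies $\alpha\in\{\gamma,\delta\}$. $S$ is a partial symmetric Sidon set with center $a_0\in S$ if every solution $(\alpha,\beta,\gamma,\delta)\in S^4$ of $\alpha+\beta=\gamma+\delta$ satisfies either $\alpha\in\{\gamma,\delta\}$ or $\alpha+\beta=\gamma+\delta=a_0$; $S$ is a partial symmetric Sidon set if it is one with center some $a_0\in S$. ''$H$ is a subgraph'' means there is an injective map from the vertices of $H$ to $G$ sending edges of $H$ to edges of $\Gamma(G,S)$. *)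

From mathcomp Require Import all_boot all_algebra.
Set Implicit Arguments. Unset Strict Implicit. Unset Printing Implicit Defensive.
Import GRing.Theory.
Local Open Scope ring_scope.

(* Edge relation of the Cayley sum graph Gamma(G,S): x ~ y iff x + y \in S
   (x = y allowed: loops). Subsets are Prop-valued predicates. *)
Definition cayley_sum_edge (G : zmodType) (S : G -> Prop) (x y : G) : Prop :=
  S (x + y).

Definition sidon (G : zmodType) (S : G -> Prop) : Prop :=
  forall a b c d : G, S a -> S b -> S c -> S d ->
    a + b = c + d -> a = c \/ a = d.

Definition partial_sym_sidon_center (G : zmodType) (S : G -> Prop) (a0 : G)
  : Prop :=
  S a0 /\
  forall a b c d : G, S a -> S b -> S c -> S d ->
    a + b = c + d -> (a = c \/ a = d) \/ (a + b = a0 /\ c + d = a0).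

Definition partial_sym_sidon (G : zmodType) (S : G -> Prop) : Prop :=
  exists a0 : G, partial_sym_sidon_center S a0.

Definition is_subgraph (n : nat) (E : rel 'I_n) (G : zmodType) (S : G -> Prop)
  : Prop :=
  exists f : 'I_n -> G, injective f /\
    forall u v : 'I_n, E u v -> cayley_sum_edge S (f u) (f v).

Definition C4_edge : rel 'I_4 :=
  fun u v => ((u.+1 %% 4)%N == v) || ((v.+1 %% 4)%N == u).

Definition K23_edge : rel 'I_5 :=
  fun u v => ((u < 2)%N && (2 <= v)%N) || ((v < 2)%N && (2 <= u)%N).

(* In a 4-cycle x-y-z-w of the Cayley sum graph, the two pairs of opposite
   edges have the same total: (x + y) + (z + w) = (x + w) + (z + y).  For a
   Sidon set this forces two opposite vertices to coincide, so there is no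
   4-cycle.  A partial symmetric Sidon set only allows the exception where
   both totals equal the center a0; a copy of K_{2,3} with parts {a, b} and
   {c, d, e} contains the 4-cycles a-c-b-d and a-c-b-e, which would both be
   exceptional, whence (a + c) + (b + d) = a0 = (a + c) + (b + e) and d = e. *)

From mathcomp Require Import all_boot all_algebra.

Set Implicit Arguments.
Unset Strict Implicit.
Unset Printing Implicit Defensive.
Import GRing.Theory.
Local Open Scope ring_scope.

Section CycleSums.

Variables (G : zmodType) (S : G -> Prop).

Lemma cycle4_sumsE (x y z w : G) : (x + y) + (z + w) = (x + w) + (z + y).
Proof. by rewrite addrACA [RHS]addrACA [w + y]addrC. Qed.

Lemma sidon_cycle4_degenerate {x y z w : G} :
  sidon S -> S (x + y) -> S (z + y) -> S (z + w) -> S (x + w) ->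
  x = z \/ y = w.
Proof.
move=> sidonS Sxy Szy Szw Sxw.
by have [/addrI|/addIr] := sidonS _ _ _ _ Sxy Szw Sxw Szy (cycle4_sumsE x y z w);
  [right | left].
Qed.

Lemma partial_sidon_cycle4_degenerate {a0 x y z w : G} :
  partial_sym_sidon_center S a0 ->
  S (x + y) -> S (z + y) -> S (z + w) -> S (x + w) ->
  [\/ x = z, y = w | (x + y) + (z + w) = a0].
Proof.
move=> [_ psidonS] Sxy Szy Szw Sxw.
by have [[/addrI|/addIr]|[]] :=
  psidonS _ _ _ _ Sxy Szw Sxw Szy (cycle4_sumsE x y z w);
  [constructor 2 | constructor 1 | constructor 3].
Qed.

Lemma partial_sidon_K23_degenerate {a0 a b c d e : G} :
  partial_sym_sidon_center S a0 ->
  S (a + c) -> S (a + d) -> S (a + e) ->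
  S (b + c) -> S (b + d) -> S (b + e) ->
  [\/ a = b, c = d, c = e | d = e].
Proof.
move=> psidonS Sac Sad Sae Sbc Sbd Sbe.
have [->|->|sum_d] := partial_sidon_cycle4_degenerate psidonS Sac Sbc Sbd Sad.
- by constructor 1.
- by constructor 2.
have [->|->|sum_e] := partial_sidon_cycle4_degenerate psidonS Sac Sbc Sbe Sae.
- by constructor 1.
- by constructor 3.
by constructor 4; apply: (addrI b); apply: (addrI (a + c)); rewrite sum_d sum_e.
Qed.

End CycleSums.

Theorem proposition3p1 (G : zmodType) (S : G -> Prop) :
  (sidon S -> ~ is_subgraph C4_edge S) /\
  (partial_sym_sidon S -> ~ is_subgraph K23_edge S).
Proof.
have inj_neq n (f : 'I_n -> G) (i j : 'I_n) :
    injective f -> val i != val j -> f i <> f j.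
  by move=> inj_f /eqP ne_ij /inj_f /(congr1 val).
split.
- move=> sidonS [f [inj_f edge]].
  have e i j (lt_i : (i < 4)%N) (lt_j : (j < 4)%N) :=
    edge (Ordinal lt_i) (Ordinal lt_j).
  by have [] := sidon_cycle4_degenerate sidonS
    (e 0 1 isT isT isT) (e 2 1 isT isT isT)
    (e 2 3 isT isT isT) (e 0 3 isT isT isT); apply: inj_neq.
- move=> [a0 psidonS] [f [inj_f edge]].
  have e i j (lt_i : (i < 5)%N) (lt_j : (j < 5)%N) :=
    edge (Ordinal lt_i) (Ordinal lt_j).
  by have [] := partial_sidon_K23_degenerate psidonS
    (e 0 2 isT isT isT) (e 0 3 isT isT isT) (e 0 4 isT isT isT)
    (e 1 2 isT isT isT) (e 1 3 isT isT isT) (e 1 4 isT isT isT); apply: inj_neq.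
Qed.
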